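(* Let $V$ be a $G$-representation. There exist $n_1\in\mathbb{N}_{>0}$ and a $G$-invariant tensor $\theta_0\in(V^* )^{\otimes n_1}$ such that for every $k\in\mathbb{N}$ there exists $M_1\in\mathbb{N}$ such that for all $m>M_1$ and all linear subspaces $W\subseteq V^{\otimes[m]}$ the following holds: if $\dim\theta(\sigma(W))\le k$ for all $\sigma\in S_m$ and all tensors $\theta\in(V^* )^{\otimes n_1}$ of the form $\theta=\theta_0\circ(\phi_0\otimes\cdots\otimes\phi_{n_1-1})$ with $(\phi_0,\ldots,\phi_{n_1-1})\in\mathrm{GL}_G(V)^{n_1}$, then $\dim W\le k$.
   Context: $G$ is a finite Abelian group and $K$ an infinite field over which every finite-dimensional $G$-representation is a direct sum of one-dimensional irreducibles; $V$ is finite-dimensional. $[m]=\{0,\ldots,m-1\}$. $\mathrm{GL}_G(V)$ is the group of invertible $G$-equivariant linear maps $V\to V$. $S_m$ acts on $V^{\otimes[m]}$ by permuting tensor factors. For $\theta\in(V^* )^{\otimes n_1}$, $\theta(\cdot)$ denotes the contraction $V^{\otimes[m]}\to V^{\otimes[m-n_1]}$ of the last $n_1$ factors: $v_0\otimes\cdots\otimes v_{m-1}\mapsto\theta(v_{m-n_1}\otimes\cdots\otimes v_{m-1})\,v_0\otimes\cdots\otimes v_{m-n_1-1}$. *)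

From HB Require Import structures.
From mathcomp Require Import all_boot all_order all_algebra all_fingroup all_solvable all_character.
Set Implicit Arguments.
Unset Strict Implicit.
Unset Printing Implicit Defensive.
Import GRing.Theory.
Local Open Scope ring_scope.

(* V = K^d (row vectors, MathComp's convention for representations).
   Tensors in V^{(x)[m]} and in (V^* )^{(x)m} are both represented by their
   coordinates w.r.t. the standard basis e_{i_0} (x) ... (x) e_{i_{m-1}}
   (resp. the dual basis), i.e. functions from multi-indices to K. *)
Section Tensors.
Variables (K : fieldType) (d : nat).

Definition idx (m : nat) := {ffun 'I_m -> 'I_d}.
Definition tensor (m : nat) := {ffun idx m -> K^o}.

(* S_m permutes tensor factors: sigma (v_0 (x)..(x) v_{m-1})
   = v_{sigma^-1 0} (x) .. (x) v_{sigma^-1 (m-1)}; in coordinates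
   (sigma t)(i) = t(i o sigma). *)
Definition perm_tensor m (s : 'S_m) (t : tensor m) : tensor m :=
  [ffun i : idx m => t [ffun k => i (s k)]].

Definition idx_cat p n (j : idx p) (l : idx n) : idx (p + n) :=
  [ffun k => match split k with inl a => j a | inr b => l b end].

Definition contract p n (theta : tensor n) (t : tensor (p + n)) : tensor p :=
  [ffun j : idx p => \sum_(l : idx n) theta l * t (idx_cat j l)].

(* theta o (phi_0 (x) .. (x) phi_{n-1}), where phi_k acts on row vectors
   by v |-> v *m phi_k, so phi_k e_b = sum_a phi_k b a e_a *)
Definition twist n (theta : tensor n) (phi : 'I_n -> 'M[K]_d) : tensor n :=
  [ffun l : idx n => \sum_(l' : idx n) theta l' * \prod_(k < n) phi k (l k) (l' k)].

Definition contract_image p n (theta : tensor n) (s : 'S_(p + n))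
  (W : {vspace tensor (p + n)}) : {vspace tensor p} :=
  (linfun (fun t => contract theta (perm_tensor s t)) @: W)%VS.

End Tensors.

Section Rep.
Variables (K : fieldType) (gT : finGroupType) (G : {group gT}) (d : nat).
Variable rho : mx_representation K G d.

Definition in_GLG (phi : 'M[K]_d) : Prop :=
  phi \in unitmx /\ forall g, g \in G -> phi *m rho g = rho g *m phi.

Definition G_invariant n (theta : tensor K d n) : Prop :=
  forall g, g \in G -> twist theta (fun _ => rho g) = theta.
End Rep.

From HB Require Import structures.
From mathcomp Require Import all_boot all_order all_algebra all_fingroup all_solvable all_character.
From mathcomp Require Import zify ring.
From Stdlib Require Import ClassicalEpsilon.
Import GRing.Theory.
Local Open Scope ring_scope.
Set Implicit Arguments.
Unset Strict Implicit.

(* Diagonalize rho as g e_i = chi_i(g) e_i and take n1 = |G| and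
   theta0 = sum_i f_i^{(x)|G|}, f_i the dual basis; it is G-invariant because
   chi_i(g)^|G| = 1, and twisting it by phi = diag(t^i) (x) 1 (x) ... (x) 1 gives
   theta_t = sum_i t^i f_i^{(x)|G|}.  If dim W > k, pick k+1 elements of W whose
   lowest nonzero coordinates I_0, ..., I_k (in the order comparing the last
   differing position) are distinct.  For m large, pigeonhole gives |G| positions
   where all I_a have the same entries and where no two I_a differ for the last
   time; permute them to the end.  Contracting with theta_t, the k+1 images are
   independent for all but finitely many t: rescaled by powers of t, their
   coordinate matrix at the remaining positions of the I_a is polynomial in t and
   triangular with nonzero diagonal at t = 0. *)

Lemma perm_extend_inj (T : finType) n (f g : 'I_n -> T) :
  injective f -> injective g -> exists s : {perm T}, forall r, s (f r) = g r.
Proof.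
move=> injf injg.
have le_n_T : (n <= #|T|)%N by rewrite -[n]card_ord; apply: leq_card injf.
pose tf := [tuple f r | r < n]; pose tg := [tuple g r | r < n].
have tf_dtuple : tf \in n.-dtuple([set: T]).
  by apply/dtuple_onP; split => [i j|i]; rewrite ?tnth_mktuple ?inE // => /injf.
have tg_dtuple : tg \in n.-dtuple([set: T]).
  by apply/dtuple_onP; split => [i j|i]; rewrite ?tnth_mktuple ?inE // => /injg.
have [s _ Es] := atransP2 (ntransitive_weak le_n_T (Sym_trans T)) tf_dtuple tg_dtuple.
exists s => r; have := congr1 (fun t => tnth t r) Es.
by rewrite /= /n_act /= !tnth_map /= !tnth_ord_tuple.
Qed.

Lemma ffun_neq_exists (aT : finType) (rT : eqType) (f g : {ffun aT -> rT}) :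
  f != g -> exists x, f x != g x.
Proof.
move=> nfg; apply/existsP; apply: contraR nfg => /existsPn fg.
by apply/eqP/ffunP => x; apply/eqP; move: (fg x); rewrite negbK.
Qed.

Lemma card_fiber_gt (T C : finType) (A : {set T}) (f : T -> C) n :
  (n * #|C| < #|A|)%N -> exists c, (n < #|[set x in A | f x == c]|)%N.
Proof.
move=> ltA; apply/existsP; apply: contraLR ltA => /existsPn small; rewrite -leqNgt.
rewrite -sum1_card (partition_big f predT) //=.
apply: (@leq_trans (\sum_(c : C) n)); last by rewrite sum_nat_const mulnC.
apply: leq_sum => c _; move: (small c); rewrite -leqNgt; apply: leq_trans.
by rewrite -sum1_card; apply: eq_leq; apply: eq_bigl => x; rewrite inE.
Qed.

Lemma poly_nonroot (K : fieldType) (q : {poly K}) :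
  (forall s : seq K, exists x, x \notin s) -> q != 0 -> exists t, q.[t] != 0.
Proof.
move=> K_inf q_neq0.
have [s [s_uniq s_size]] : exists s : seq K, uniq s /\ size s = size q.
  elim: (size q) => [|n [s [s_uniq <-]]]; first by exists [::].
  by have [x xs] := K_inf s; exists (x :: s); rewrite /= xs s_uniq.
have [all_roots|/allPn[x _ nroot]] := boolP (all (root q) s); last by exists x.
by move: (max_poly_roots q_neq0 all_roots s_uniq); rewrite s_size ltnn.
Qed.

Lemma limg_dim_le (R : fieldType) (U V : vectType R) (f : 'Hom(U, V)) (X : {vspace U}) :
  (\dim (f @: X) <= \dim X)%N.
Proof. by rewrite -(limg_ker_dim f X) leq_addl. Qed.

Definition classicb (P : Prop) : bool :=
  if excluded_middle_informative P then true else false.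

Lemma classicbP (P : Prop) : reflect P (classicb P).
Proof. by rewrite /classicb; case: excluded_middle_informative => H; constructor. Qed.

Lemma regular_scaleE (K : fieldType) (a b : K^o) : a *: b = a * b.
Proof. by []. Qed.

Lemma linfun_linearE (R : fieldType) (U V : vectType R) (f : U -> V) :
  linear f -> linfun f =1 f.
Proof.
move=> f_lin; pose fL : {linear U -> V} := HB.pack f (GRing.isLinear.Build _ _ _ _ f f_lin).
exact: (lfunE fL).
Qed.

Lemma diag_mx_expn (R : pzSemiRingType) n (e : 'rV[R]_n) k :
  diag_mx e ^+ k = diag_mx (\row_j e 0 j ^+ k).
Proof.
elim: k => [|k IH]; first by apply/matrixP => i j; rewrite !mxE expr0.
by rewrite exprS IH -mulmxE mulmx_diag; congr diag_mx; apply/rowP => j; rewrite !mxE exprS.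
Qed.

Lemma det_rank_triangular_neq0 (R : fieldType) n (M : 'M[R]_n) (f : 'I_n -> nat) :
  injective f -> (forall a, M a a != 0) -> (forall a b, (f a < f b)%N -> M a b = 0) ->
  \det M != 0.
Proof.
move=> f_inj nz_diag tri; apply/negP => /det0P [v nz_v vM0].
have [a0 nz_a0] : exists a, v 0 a != 0.
  apply/existsP; apply: contraR nz_v => /existsPn v0.
  by apply/eqP/rowP => a; rewrite mxE; apply/eqP; move: (v0 a); rewrite negbK.
have [am nz_am am_max] := @arg_maxnP _ a0 (fun a => v 0 a != 0) f nz_a0.
have := congr1 (fun M : 'rV_n => M 0 am) vM0; rewrite !mxE (bigD1 am) //= big1 ?addr0.
  by move/eqP; rewrite mulf_eq0 (negbTE nz_am) (negbTE (nz_diag am)).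
move=> a ne_a; have [->|nz_a] := eqVneq (v 0 a) 0; first by rewrite mul0r.
rewrite tri ?mulr0 // ltn_neqAle; apply/andP; split; last exact: am_max.
by apply: contra ne_a => /eqP/f_inj ->.
Qed.

(** * Lexicographic order on multi-indices *)

Section BaseExpansion.
Variable d : nat.

Lemma sum_digits_lt (g : nat -> nat) q :
  (forall r, (r < q)%N -> (g r < d)%N) -> (\sum_(0 <= r < q) g r * d ^ r < d ^ q)%N.
Proof.
elim: q => [|q IH] g_lt; first by rewrite big_geq.
rewrite big_nat_recr //= expnS.
have lt_low := IH (fun r lt_rq => g_lt r (ltnW lt_rq)).
have lt_top : (g q < d)%N := g_lt q (ltnSn q).
have : (g q * d ^ q <= (d - 1) * d ^ q)%N by apply: leq_mul => //; lia.
nia.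
Qed.

Lemma sum_digits_lex_lt m (g g' : nat -> nat) q : (q < m)%N ->
  (forall r, (r < q)%N -> (g r < d)%N) ->
  (forall r, (q < r)%N -> (r < m)%N -> g r = g' r) -> (g q < g' q)%N ->
  (\sum_(0 <= r < m) g r * d ^ r < \sum_(0 <= r < m) g' r * d ^ r)%N.
Proof.
move=> lt_qm g_lt eq_above lt_q.
rewrite !(@big_cat_nat _ _ _ q.+1 0 m) //= !big_nat_recr //=.
rewrite (@eq_big_nat _ _ _ q.+1 m (fun i => g i * d ^ i)%N (fun i => g' i * d ^ i)%N);
  last by move=> i /andP[lt_qi lt_im]; rewrite eq_above.
have := sum_digits_lt g_lt.
have : ((g q).+1 * d ^ q <= g' q * d ^ q)%N by apply: leq_mul.
nia.
Qed.

Variable m : nat.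

(* digit I r = I r padded with 0 beyond m, so that ranks are plain nat sums *)
Definition digit (I : idx d m) (r : nat) : nat :=
  if insub r is Some x then nat_of_ord (I x) else 0%N.

Definition idx_rank (I : idx d m) := (\sum_(0 <= r < m) digit I r * d ^ r)%N.

Lemma digitE (I : idx d m) (r : 'I_m) : digit I r = I r.
Proof. by rewrite /digit valK. Qed.

Lemma digit_lt (I : idx d m) r : (r < m)%N -> (digit I r < d)%N.
Proof. by move=> lt_rm; rewrite /digit insubT. Qed.

Lemma idx_rank_lt (I J : idx d m) (q : 'I_m) :
  (forall r : 'I_m, (q < r)%N -> I r = J r) -> (I q < J q)%N ->
  (idx_rank I < idx_rank J)%N.
Proof.
move=> eq_above lt_q; apply: (@sum_digits_lex_lt m (digit I) (digit J) q (ltn_ord q)).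
- by move=> r lt_rq; apply: digit_lt; apply: ltn_trans lt_rq _.
- by move=> r lt_qr lt_rm; rewrite -[r]/(val (Ordinal lt_rm)) !digitE eq_above.
- by rewrite !digitE.
Qed.

Lemma idx_top_diff (I J : idx d m) : I != J ->
  exists q : 'I_m, I q != J q /\ forall r : 'I_m, (q < r)%N -> I r = J r.
Proof.
move=> /ffun_neq_exists[q0 neq_q0].
have [q neq_q q_max] := @arg_maxnP _ q0 (fun q => I q != J q) val neq_q0.
exists q; split => // r lt_qr; apply/eqP; apply: contraTT lt_qr => neq_r.
by rewrite -leqNgt; apply: q_max.
Qed.

Lemma idx_rank_inj : injective idx_rank.
Proof.
move=> I J eq_rank; apply/eqP; apply: contraT => /idx_top_diff[q [neq_q eq_above]].
case: (ltngtP (I q) (J q)) => [lt_q|lt_q|/val_inj eq_q].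
- by move: (idx_rank_lt eq_above lt_q); rewrite eq_rank ltnn.
- have eq_above' (r : 'I_m) : (q < r)%N -> J r = I r by move=> /eq_above ->.
  by move: (idx_rank_lt eq_above' lt_q); rewrite eq_rank ltnn.
- by rewrite eq_q eqxx in neq_q.
Qed.

End BaseExpansion.

Section Lowest.
Variables (K : fieldType) (d m : nat).

Definition lowest_idx (u : tensor K d m) (I : idx d m) :=
  u I != 0 /\ forall J, (idx_rank J < idx_rank I)%N -> u J = 0.

Lemma lowest_idx_exists (u : tensor K d m) : u != 0 -> exists I, lowest_idx u I.
Proof.
move=> /ffun_neq_exists[I0]; rewrite ffunE => nz_I0.
have [I nz_I I_min] := @arg_minnP _ I0 (fun I => u I != 0) (@idx_rank d m) nz_I0.
exists I; split => // J lt_JI; apply/eqP; apply: contraTT lt_JI => nz_J.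
by rewrite -leqNgt; apply: I_min.
Qed.

Lemma lowest_idx_rank_le (u : tensor K d m) I J :
  lowest_idx u I -> u J != 0 -> (idx_rank I <= idx_rank J)%N.
Proof. by move=> [_ low] nz_J; rewrite leqNgt; apply: contra nz_J => /low ->. Qed.

Lemma dim_vspace_le_support (W : {vspace tensor K d m}) (L : {set idx d m}) :
  (forall u, u \in W -> (forall I, I \in L -> u I = 0) -> u = 0) -> (\dim W <= #|L|)%N.
Proof.
move=> W_supp.
pose pi (u : tensor K d m) : tensor K d m := [ffun I => if I \in L then u I else 0].
have pi_lin : linear pi.
  move=> a u v; apply/ffunP => I; rewrite !ffunE.
  by case: (I \in L); rewrite ?mulr0 ?scaler0 ?addr0.
have ker_pi : (W :&: lker (linfun pi) = 0)%VS.
  apply/eqP; rewrite -subv0; apply/subvP => u; rewrite memv_cap memv_ker memv0.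
  case/andP=> uW; rewrite linfun_linearE // => /eqP pi_u0; apply/eqP/W_supp => // I IL.
  by have := congr1 (fun v : tensor K d m => v I) pi_u0; rewrite !ffunE IL.
rewrite -(limg_dim_eq ker_pi).
pose delta (I : idx d m) : tensor K d m := [ffun J => (J == I)%:R].
apply: (@leq_trans (size [seq delta X | X <- enum L])); last by rewrite size_map -cardE.
apply: (leq_trans _ (dim_span _)); apply: dimvS; apply/subvP => v /memv_imgP [u _ ->].
have -> : linfun pi u = \sum_(I <- enum L) u I *: delta I.
  rewrite linfun_linearE //; apply/ffunP => J; rewrite sum_ffunE !ffunE.
  under eq_bigr do rewrite !ffunE regular_scaleE.
  case: ifP => JL.
  - rewrite (bigD1_seq J) ?mem_enum ?enum_uniq //= eqxx mulr1 big1 ?addr0 //.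
    by move=> I /negbTE nJI; rewrite eq_sym nJI mulr0.
  - rewrite big1_seq // => I /andP[_]; rewrite mem_enum => IL.
    by case: eqP => [eq_JI|_]; [rewrite -eq_JI JL in IL | rewrite mulr0].
rewrite big_seq; apply: memv_suml => I IL; apply: memvZ; apply: memv_span.
exact: map_f.
Qed.

Lemma vspace_lowest_idxs (W : {vspace tensor K d m}) n : (n <= \dim W)%N ->
  exists I : 'I_n -> idx d m, exists w : 'I_n -> tensor K d m,
    injective I /\ forall a, w a \in W /\ lowest_idx (w a) (I a).
Proof.
move=> le_nW.
pose L := [set I | classicb (exists2 w, w \in W & lowest_idx w I)].
have le_WL : (\dim W <= #|L|)%N.
  apply: dim_vspace_le_support => u uW u_L; apply/eqP; apply: contraT.
  move=> /lowest_idx_exists[I low_I]; have [nz_I _] := low_I.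
  have IL : I \in L by rewrite inE; apply/classicbP; exists u.
  by rewrite u_L ?eqxx in nz_I.
pose I a := enum_val (widen_ord (leq_trans le_nW le_WL) a).
have lowest_I a : exists w, w \in W /\ lowest_idx w (I a).
  move: (enum_valP (widen_ord (leq_trans le_nW le_WL) a)).
  by rewrite inE => /classicbP[w wW low_w]; exists w.
exists I, (fun a => proj1_sig (constructive_indefinite_description _ (lowest_I a))).
split; last by move=> a; case: constructive_indefinite_description.
by move=> a b /enum_val_inj/(congr1 val) /= /val_inj.
Qed.

End Lowest.

(** * Choice of the contracted positions *)

Section TopDiff.
Variables (d k m : nat) (I : 'I_k -> idx d m).

Definition top_diff a b (r : 'I_m) :=
  I a r != I b r /\ forall r' : 'I_m, (r < r')%N -> I a r' = I b r'.

Definition top_diffb a b (r : 'I_m) :=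
  (I a r != I b r) && [forall r' : 'I_m, (r < r')%N ==> (I a r' == I b r')].

Lemma top_diffP a b r : reflect (top_diff a b r) (top_diffb a b r).
Proof.
apply: (iffP andP) => [[neq_r /forallP eq_above]|[neq_r eq_above]]; split => //.
  by move=> r' lt_rr'; apply/eqP; move: (eq_above r') => /implyP; apply.
by apply/forallP => r'; apply/implyP => /eq_above ->.
Qed.

Lemma top_diff_uniq a b r1 r2 : top_diff a b r1 -> top_diff a b r2 -> r1 = r2.
Proof.
move=> [neq1 above1] [neq2 above2]; apply: val_inj.
case: (ltngtP r1 r2) => // lt_r.
- by move: neq2; rewrite above1 // eqxx.
- by move: neq1; rewrite above2 // eqxx.
Qed.

Lemma card_top_diff : (#|[set r | [exists a, exists b, top_diffb a b r]]| <= k * k)%N.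
Proof.
pose top (ab : 'I_k * 'I_k) := [pick r | top_diffb ab.1 ab.2 r].
have sub : [set r | [exists a, exists b, top_diffb a b r]] \subset pmap top (enum predT).
  apply/subsetP => r; rewrite inE => /existsP[a /existsP[b ab_r]].
  rewrite mem_pmap; apply/mapP; exists (a, b); first by rewrite mem_enum.
  rewrite /top /=; case: pickP => [r' ab_r'|/(_ r)]; last by rewrite ab_r.
  by rewrite (top_diff_uniq (top_diffP _ _ _ ab_r') (top_diffP _ _ _ ab_r)).
apply: (leq_trans (subset_leq_card sub)); apply: (leq_trans (card_size _)).
by rewrite size_pmap (leq_trans (count_size _ _)) // -cardE card_prod card_ord.
Qed.

(* Outside the at most k^2 top-difference positions, the column (I a r)_a takes at
   most d^k values, so one of them is taken at N positions once m is large. *)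
Lemma common_column_positions N : (0 < N)%N -> (k * k + N.-1 * d ^ k < m)%N ->
  exists f : 'I_N -> 'I_m, injective f /\
  exists c : {ffun 'I_k -> 'I_d}, forall r,
    (forall a, I a (f r) = c a) /\ (forall a b, ~ top_diff a b (f r)).
Proof.
move=> N_gt0 large_m.
have card_D := card_top_diff; set D := [set r | _] in card_D.
have card_compl : (N.-1 * #|{ffun 'I_k -> 'I_d}| < #|~: D|)%N.
  rewrite cardsCs card_ffun !card_ord setCK.
  by move: large_m card_D; set X := (N.-1 * _)%N; lia.
have [c card_c] := card_fiber_gt (fun r : 'I_m => [ffun a => I a r]) card_compl.
set C := [set x in _ | _] in card_c.
have le_N : (N <= #|C|)%N by lia.
exists (fun r => enum_val (widen_ord le_N r)); split.
  by move=> a b /enum_val_inj/(congr1 val) /= /val_inj.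
exists c => r; move: (enum_valP (widen_ord le_N r)); rewrite !inE => /andP[notD /eqP col].
split; first by move=> a; rewrite -col ffunE.
move=> a b /top_diffP ab_r; move: notD; apply/negP; rewrite negbK.
by apply/existsP; exists a; apply/existsP; exists b.
Qed.

End TopDiff.

Lemma contracted_block d p N k (I : 'I_k -> idx d (p + N)) :
  (0 < N)%N -> (k * k + N.-1 * d ^ k < p + N)%N ->
  exists s : 'S_(p + N), exists h : 'I_(p + N), [/\ (p <= s h)%N,
    forall x, (p <= s x)%N -> (x <= h)%N,
    forall a x, (p <= s x)%N -> I a x = I a h &
    forall a b, ~ top_diff I a b h].
Proof.
move=> N_gt0 large.
have [f [f_inj [c f_col]]] := common_column_positions I N_gt0 large.
have [s s_f] := perm_extend_inj f_inj (@rshift_inj p N).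
have block_f x : (p <= s x)%N -> exists r, x = f r.
  move=> le_p; have lt_r : (s x - p < N)%N by rewrite ltn_subLR // (ltn_ord (s x)).
  exists (Ordinal lt_r); apply: (@perm_inj _ s); rewrite s_f; apply: val_inj => /=.
  by rewrite subnKC.
have f_block r : (p <= s (f r))%N by rewrite s_f /= leq_addr.
have [h h_block h_max] :=
  @arg_maxnP _ (f (Ordinal N_gt0)) (fun x => p <= s x)%N val (f_block _).
have [rh eq_h] := block_f h h_block.
exists s, h; split => //.
- by move=> a x /block_f[r ->]; rewrite eq_h !(proj1 (f_col _)).
- by rewrite eq_h; exact: (proj2 (f_col rh)).
Qed.

(** * Independence of the contracted tensors *)

Section ContractedIndependence.
Variables (K : fieldType) (d m k : nat).
Variables (I : 'I_k.+1 -> idx d m) (w : 'I_k.+1 -> tensor K d m).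
Hypothesis I_inj : injective I.
Hypothesis w_lowest : forall a, lowest_idx (w a) (I a).
Variables (S : {set 'I_m}) (h : 'I_m).
Hypothesis h_in_S : h \in S.
Hypothesis h_max : forall x, x \in S -> (x <= h)%N.
Hypothesis I_const_S : forall a x, x \in S -> I a x = I a h.
Hypothesis h_not_top_diff : forall a b, ~ top_diff I a b h.

Definition fill a (i : 'I_d) : idx d m := [ffun x => if x \in S then i else I a x].

Definition agree_above a b := [forall r : 'I_m, (h < r)%N ==> (I a r == I b r)].

Definition rank_above a :=
  (\sum_(0 <= r < m) (if (h < r)%N then digit (I a) r else 0) * d ^ r)%N.

Definition row_exp a := (d * rank_above a)%N.
Definition col_exp b := (d * rank_above b + I b h)%N.

Lemma agree_above_at a b : agree_above a b -> I a h = I b h.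
Proof.
move=> /forallP agree; apply/eqP; apply: contraT => neq_h; exfalso.
apply: (h_not_top_diff (a := a) (b := b)); split => // r lt_hr.
by apply/eqP; move: (agree r) => /implyP; apply.
Qed.

Lemma fill_above a (i : 'I_d) (x : 'I_m) : (h < x)%N -> fill a i x = I a x.
Proof.
move=> lt_hx; rewrite ffunE; case: ifP => // xS.
by move: (h_max xS); rewrite leqNgt lt_hx.
Qed.

Lemma fill_at a (i : 'I_d) : fill a i h = i.
Proof. by rewrite ffunE h_in_S. Qed.

Lemma fill_self a : fill a (I a h) = I a.
Proof. by apply/ffunP => x; rewrite ffunE; case: ifP => // xS; rewrite I_const_S. Qed.

Lemma fill_rank_lt a b (i : 'I_d) :
  agree_above a b -> (i < I b h)%N -> (idx_rank (fill a i) < idx_rank (I b))%N.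
Proof.
move=> /forallP agree lt_i; apply: (idx_rank_lt (q := h)); last by rewrite fill_at.
by move=> r lt_hr; rewrite fill_above //; apply/eqP; move: (agree r) => /implyP; apply.
Qed.

Lemma rank_above_eq a b : agree_above a b -> rank_above a = rank_above b.
Proof.
move=> /forallP agree; apply: eq_big_nat => r /andP[_ lt_rm]; case: ifP => // lt_hr.
rewrite -[r]/(val (Ordinal lt_rm)) !digitE.
by move: (agree (Ordinal lt_rm)) => /implyP /(_ lt_hr) /eqP ->.
Qed.

Lemma rank_above_lt a b (i : 'I_d) : ~~ agree_above a b ->
  (idx_rank (I b) <= idx_rank (fill a i))%N -> (rank_above b < rank_above a)%N.
Proof.
move=> /forallPn [r0]; rewrite negb_imply => /andP [lt_hr0 neq_r0] le_rank.
have neq_fill : fill a i != I b.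
  by apply: contraNneq neq_r0 => <-; rewrite fill_above.
have [q [neq_q eq_above]] := idx_top_diff neq_fill.
have lt_hq : (h < q)%N.
  rewrite ltnNge; apply/negP => le_qh.
  by move: neq_r0; rewrite -(fill_above a i lt_hr0) eq_above ?eqxx //; apply: leq_ltn_trans lt_hr0.
case: (ltngtP (fill a i q) (I b q)) => [lt_q|lt_q|/val_inj eq_q].
- by move: le_rank; rewrite leqNgt (idx_rank_lt eq_above lt_q).
- apply: (@sum_digits_lex_lt d m _ _ q (ltn_ord q)).
  + move=> r lt_rq; case: ifP => _; last exact: leq_ltn_trans (leq0n _) (ltn_ord (I b h)).
    by apply: digit_lt; apply: ltn_trans lt_rq (ltn_ord q).
  + move=> r lt_qr lt_rm; rewrite (ltn_trans lt_hq lt_qr) -[r]/(val (Ordinal lt_rm)) !digitE.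
    by rewrite -(eq_above (Ordinal lt_rm)) // fill_above //; apply: ltn_trans lt_qr.
  + by rewrite lt_hq !digitE -(fill_above a i lt_hq).
- by rewrite eq_q eqxx in neq_q.
Qed.

Lemma col_exp_le a b (i : 'I_d) : w b (fill a i) != 0 -> (col_exp b <= row_exp a + i)%N.
Proof.
move=> nz; have le_rank := lowest_idx_rank_le (w_lowest b) nz.
rewrite /col_exp /row_exp; have [agree|disagree] := boolP (agree_above a b).
  rewrite (rank_above_eq agree) leq_add2l leqNgt; apply/negP => lt_i.
  by move: le_rank; rewrite leqNgt (fill_rank_lt agree lt_i).
have : (d * rank_above b + d <= d * rank_above a)%N.
  by rewrite -mulnSr leq_mul2l (rank_above_lt disagree le_rank) orbT.
by have := ltn_ord (I b h); lia.
Qed.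

Lemma shift_exp_eq0 a b (i : 'I_d) : w b (fill a i) != 0 ->
  (row_exp a + i - col_exp b == 0)%N -> agree_above a b /\ i = I b h.
Proof.
move=> nz; rewrite subn_eq0 => le_exp.
have eq_exp : col_exp b = (row_exp a + i)%N by apply/eqP; rewrite eqn_leq col_exp_le.
have le_rank := lowest_idx_rank_le (w_lowest b) nz.
have [agree|disagree] := boolP (agree_above a b).
  split => //; apply/val_inj/esym/eqP; move: eq_exp.
  by rewrite /col_exp /row_exp (rank_above_eq agree) => /eqP; rewrite eqn_add2l.
have : (d * rank_above b + d <= d * rank_above a)%N.
  by rewrite -mulnSr leq_mul2l (rank_above_lt disagree le_rank) orbT.
by move: eq_exp; rewrite /col_exp /row_exp; have := ltn_ord (I b h); lia.
Qed.

(* Rescaling row a by t^(row_exp a) and column b by t^-(col_exp b) turns the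
   contraction matrix (sum_i t^i w b (fill a i))_(a,b) into a polynomial matrix
   whose value at t = 0 is triangular w.r.t. the rank of the lowest indices. *)
Definition shift_mx : 'M[{poly K}]_k.+1 :=
  \matrix_(a, b) \sum_(i : 'I_d) w b (fill a i) *: 'X^(row_exp a + i - col_exp b).

Lemma shift_mx_horner (t : K) a b :
  t ^+ col_exp b * (shift_mx a b).[t] =
  t ^+ row_exp a * \sum_(i : 'I_d) t ^+ i * w b (fill a i).
Proof.
rewrite mxE horner_sum !mulr_sumr; apply: eq_bigr => i _; rewrite hornerZ hornerXn.
have [->|nz] := eqVneq (w b (fill a i)) 0; first by rewrite !mulr0 mul0r mulr0.
by rewrite mulrCA -exprD subnKC ?col_exp_le // exprD; ring.
Qed.

Lemma shift_mx_at0 a b :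
  (shift_mx a b).[0] = if agree_above a b then w b (I a) else 0.
Proof.
rewrite mxE horner_sum; under eq_bigr do rewrite hornerZ hornerXn expr0n.
have [agree|disagree] := boolP (agree_above a b).
  rewrite (bigD1 (I b h)) //= big1 => [|i ne_i].
    rewrite /row_exp /col_exp (rank_above_eq agree) subnn eqxx mulr1 addr0.
    by rewrite -(agree_above_at agree) fill_self.
  have [->|nz] := eqVneq (w b (fill a i)) 0; first by rewrite mul0r.
  case: eqP => [/eqP exp0|]; last by rewrite mulr0.
  by have [_ eq_i] := shift_exp_eq0 nz exp0; rewrite eq_i eqxx in ne_i.
rewrite big1 // => i _; have [->|nz] := eqVneq (w b (fill a i)) 0; first by rewrite mul0r.
case: eqP => [/eqP exp0|]; last by rewrite mulr0.
by have [agree _] := shift_exp_eq0 nz exp0; rewrite agree in disagree.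
Qed.

Lemma det_shift_mx_at0 : (\det shift_mx).[0] != 0.
Proof.
rewrite -horner_evalE -det_map_mx.
apply: (det_rank_triangular_neq0 (f := fun a => idx_rank (I a))).
- by move=> a b /idx_rank_inj/I_inj.
- move=> a; rewrite mxE /= horner_evalE shift_mx_at0.
  have -> : agree_above a a by apply/forallP => r; rewrite eqxx implybT.
  exact: (proj1 (w_lowest a)).
- move=> a b lt_ab; rewrite mxE /= horner_evalE shift_mx_at0.
  by case: ifP => // _; apply: (proj2 (w_lowest b)).
Qed.

Lemma filled_sums_free (t : K) : t != 0 -> (\det shift_mx).[t] != 0 ->
  forall lam : 'I_k.+1 -> K,
    (forall a, \sum_b lam b * \sum_(i : 'I_d) t ^+ i * w b (fill a i) = 0) ->
  forall b, lam b = 0.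
Proof.
move=> nz_t nz_det lam lam_rel.
pose Mt := map_mx (horner_eval t) shift_mx.
have Mt_unit : Mt \in unitmx by rewrite unitmxE det_map_mx unitfE.
pose mu : 'cV[K]_k.+1 := \col_b (lam b * t ^+ col_exp b).
have Mt_mu : Mt *m mu = 0.
  apply/colP => a; rewrite !mxE.
  transitivity (t ^+ row_exp a * \sum_b lam b * \sum_(i : 'I_d) t ^+ i * w b (fill a i));
    last by rewrite lam_rel mulr0.
  rewrite mulr_sumr; apply: eq_bigr => b _.
  have -> : Mt a b = (shift_mx a b).[t] by rewrite [LHS]mxE.
  rewrite [mu b 0]mxE; transitivity (lam b * (t ^+ col_exp b * (shift_mx a b).[t])); first by ring.
  by rewrite shift_mx_horner; ring.
have mu0 : mu = 0 by rewrite -(mulKmx Mt_unit mu) Mt_mu mulmx0.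
move=> b; have := congr1 (fun M : 'cV[K]_k.+1 => M b 0) mu0; rewrite /= !mxE => /eqP.
by rewrite mulf_eq0 expf_eq0 (negbTE nz_t) andbF orbF => /eqP.
Qed.

End ContractedIndependence.

Section DiagForm.
Variables (K : fieldType) (d p N : nat).

Definition diag_form (c : 'I_d -> K) : tensor K d N :=
  [ffun l => \sum_i c i * (l == [ffun=> i])%:R].

Definition contract_perm (theta : tensor K d N) (s : 'S_(p + N)) (u : tensor K d (p + N)) :
  tensor K d p := contract theta (perm_tensor s u).

Lemma contract_perm_is_linear theta s : linear (contract_perm theta s).
Proof.
move=> a u v; apply/ffunP => j; rewrite !ffunE regular_scaleE mulr_sumr -big_split.
by apply: eq_bigr => l _; rewrite !ffunE /= regular_scaleE; ring.
Qed.

HB.instance Definition _ theta s :=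
  GRing.isLinear.Build K (tensor K d (p + N)) (tensor K d p) *:%R
    (contract_perm theta s) (contract_perm_is_linear theta s).

Lemma contract_perm_diag_form (c : 'I_d -> K) s u (J : idx d p) :
  contract_perm (diag_form c) s u J =
  \sum_i c i * u [ffun x => idx_cat J [ffun=> i] (s x)].
Proof.
rewrite !ffunE; under eq_bigr do rewrite !ffunE big_distrl /=.
rewrite exchange_big; apply: eq_bigr => i _.
rewrite (bigD1 [ffun=> i]) //= eqxx mulr1 big1 ?addr0 // => l /negbTE ->.
by rewrite mulr0 mul0r.
Qed.

Lemma idx_cat_perm_block (s : 'S_(p + N)) (I : idx d (p + N)) (i : 'I_d) :
  [ffun x => idx_cat [ffun r => I (s^-1 (lshift N r))%g] [ffun=> i] (s x)] =
  [ffun x => if x \in [set y | (p <= s y)%N] then i else I x].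
Proof.
apply/ffunP => x; rewrite !ffunE inE; case: splitP => r eq_r.
  rewrite ffunE ifF; last by rewrite eq_r leqNgt ltn_ord.
  by rewrite (_ : lshift N r = s x) ?permK //; apply: val_inj; rewrite /= eq_r.
by rewrite eq_r leq_addr ffunE.
Qed.

End DiagForm.

Lemma contract_diag_form_dim_gt (K : fieldType) d p N k :
  (forall s : seq K, exists x, x \notin s) ->
  (0 < N)%N -> (k.+1 * k.+1 + N.-1 * d ^ k.+1 < p + N)%N ->
  forall W : {vspace tensor K d (p + N)}, (k < \dim W)%N ->
  exists s : 'S_(p + N), exists2 t : K, t != 0 &
    (k < \dim (linfun (contract_perm (diag_form N (fun i : 'I_d => t ^+ i)) s) @: W))%N.
Proof.
move=> K_inf N_gt0 large W dimW.
have [I [w [I_inj w_low]]] := vspace_lowest_idxs dimW.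
have [s [h [h_block h_max I_const h_top]]] := contracted_block I N_gt0 large.
pose S := [set x | (p <= s x)%N].
have h_S : h \in S by rewrite inE.
have h_maxS x : x \in S -> (x <= h)%N by rewrite inE; apply: h_max.
have I_constS a x : x \in S -> I a x = I a h by rewrite inE; apply: I_const.
have lowest a := proj2 (w_low a).
have det0 := det_shift_mx_at0 I_inj lowest h_S h_maxS I_constS h_top.
have nz_det : \det (shift_mx I w S h) != 0 by apply: contra det0 => /eqP ->; rewrite horner0.
have [t] := poly_nonroot K_inf (mulf_neq0 (negbT (polyX_eq0 K)) nz_det).
rewrite hornerM hornerX mulf_eq0 negb_or => /andP [nz_t nz_det_t].
exists s, t => //.
pose X := [tuple linfun (contract_perm (diag_form N (fun i : 'I_d => t ^+ i)) s) (w b) | b < k.+1].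
have X_free : free X.
  apply/freeP => lam lam_rel; apply: (filled_sums_free lowest h_S h_maxS nz_t nz_det_t) => a.
  have := congr1 (fun T : tensor K d p => T [ffun r => I a (s^-1 (lshift N r))%g]) lam_rel.
  rewrite /= sum_ffunE ffunE => sum0; rewrite -[RHS]sum0; apply: eq_bigr => b _.
  rewrite ffunE regular_scaleE (nth_map ord0) ?size_enum_ord // nth_ord_enum lfunE /=.
  rewrite contract_perm_diag_form; congr (_ * _); apply: eq_bigr => i _.
  by rewrite idx_cat_perm_block; congr (_ * w b _); apply/ffunP => x; rewrite !ffunE.
have := eqnP X_free; rewrite size_tuple => <-.
apply: dimvS; apply/span_subvP => v /mapP [b _ ->].
by apply: memv_img; case: (w_low b).
Qed.

(** * Change of basis *)

Section TensorAction.
Variables (K : fieldType) (d : nat).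

Lemma idx_catl p n (j : idx d p) (l : idx d n) x : idx_cat j l (lshift n x) = j x.
Proof. by rewrite ffunE (unsplitK (inl _ x) : split (lshift n x) = inl x). Qed.

Lemma idx_catr p n (j : idx d p) (l : idx d n) y : idx_cat j l (rshift p y) = l y.
Proof. by rewrite ffunE (unsplitK (inr _ y) : split (rshift p y) = inr y). Qed.

Lemma sum_idx_cat p n (F : idx d (p + n) -> K) :
  \sum_(L : idx d (p + n)) F L = \sum_(j : idx d p) \sum_(l : idx d n) F (idx_cat j l).
Proof.
rewrite pair_big /=.
have cat_bij : bijective (fun jl : idx d p * idx d n => idx_cat jl.1 jl.2).
  exists (fun L : idx d (p + n) => ([ffun x => L (lshift n x)], [ffun y => L (rshift p y)])).
    by case=> j l /=; congr (_, _); apply/ffunP => x; rewrite ffunE ?idx_catl ?idx_catr.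
  move=> L; apply/ffunP => x; rewrite ffunE /=.
  by case: splitP => r eq_r; rewrite ffunE; congr (L _); apply: val_inj.
by rewrite (reindex _ (onW_bij _ cat_bij)).
Qed.

Lemma prod_eq_idx m (l l' : idx d m) : \prod_x ((l x == l' x)%:R : K) = (l == l')%:R.
Proof.
have [->|/ffun_neq_exists[x ne_x]] := eqVneq l l'; first by rewrite big1 // => x _; rewrite eqxx.
by rewrite (bigD1 x) //= (negbTE ne_x) mul0r.
Qed.

(* A^{(x)m} acting on V^{(x)m}, with A acting on row vectors *)
Definition tensor_act m (A : 'M[K]_d) (u : tensor K d m) : tensor K d m :=
  [ffun l' : idx d m => \sum_(l : idx d m) (\prod_x A (l x) (l' x)) * u l].

Lemma tensor_act_is_linear m A : linear (@tensor_act m A).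
Proof.
move=> a u v; apply/ffunP => l'; rewrite !ffunE /= regular_scaleE mulr_sumr -big_split.
by apply: eq_bigr => l _; rewrite !ffunE /= regular_scaleE; ring.
Qed.

HB.instance Definition _ m A :=
  GRing.isLinear.Build K (tensor K d m) (tensor K d m) *:%R
    (@tensor_act m A) (@tensor_act_is_linear m A).

Lemma tensor_act1 m u : @tensor_act m 1%:M u = u.
Proof.
apply/ffunP => l'; rewrite ffunE.
under eq_bigr do (under eq_bigr do rewrite mxE; rewrite prod_eq_idx).
by rewrite (bigD1 l') //= eqxx mul1r big1 ?addr0 // => l /negbTE ->; rewrite mul0r.
Qed.

Lemma tensor_actM m A B u : tensor_act B (@tensor_act m A u) = tensor_act (A *m B) u.
Proof.
apply/ffunP => l''; rewrite !ffunE.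
transitivity (\sum_(l : idx d m) (\sum_(l' : idx d m)
   (\prod_x A (l x) (l' x)) * (\prod_x B (l' x) (l'' x))) * u l).
  under eq_bigr do rewrite ffunE mulr_sumr.
  rewrite exchange_big; apply: eq_bigr => l _; rewrite mulr_suml.
  by apply: eq_bigr => l' _; ring.
apply: eq_bigr => l _; congr (_ * _); under [RHS]eq_bigr do rewrite mxE.
rewrite (bigA_distr_bigA (fun x y => A (l x) y * B y (l'' x))).
by apply: eq_bigr => l' _; rewrite -big_split.
Qed.

Lemma perm_tensor_act m A (s : 'S_m) u :
  perm_tensor s (tensor_act A u) = tensor_act A (perm_tensor s u).
Proof.
apply/ffunP => l'; rewrite !ffunE.
have perm_bij : bijective (fun L : idx d m => [ffun x => L (s x)]).
  by exists (fun L : idx d m => [ffun x => L (s^-1 x)%g]) => L; apply/ffunP => x;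
    rewrite !ffunE ?permK ?permKV.
rewrite (reindex _ (onW_bij _ perm_bij)); apply: eq_bigr => L _.
rewrite !ffunE; congr (_ * u _).
by rewrite [RHS](reindex_inj (@perm_inj _ s)); apply: eq_bigr => x _; rewrite !ffunE.
Qed.

Lemma tensor_act_contract p n A (theta : tensor K d n) (v : tensor K d (p + n)) :
  tensor_act A (contract (twist theta (fun _ => A)) v) = contract theta (tensor_act A v).
Proof.
apply/ffunP => j'; rewrite !ffunE.
transitivity (\sum_(j : idx d p) \sum_(l : idx d n) \sum_(l' : idx d n)
  (\prod_x A (j x) (j' x)) * (theta l' * \prod_y A (l y) (l' y)) * v (idx_cat j l)).
  apply: eq_bigr => j _; rewrite ffunE mulr_sumr; apply: eq_bigr => l _.
  by rewrite ffunE big_distrl /= mulr_sumr; apply: eq_bigr => l' _; ring.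
transitivity (\sum_(l' : idx d n) \sum_(j : idx d p) \sum_(l : idx d n)
  (\prod_x A (j x) (j' x)) * (theta l' * \prod_y A (l y) (l' y)) * v (idx_cat j l)).
  by under eq_bigr do rewrite exchange_big; rewrite exchange_big.
apply: eq_bigr => l' _; rewrite ffunE sum_idx_cat mulr_sumr; apply: eq_bigr => j _.
rewrite mulr_sumr; apply: eq_bigr => l _; rewrite big_split_ord /=.
rewrite [in RHS](eq_bigr (fun x => A (j x) (j' x))) => [|x _]; last by rewrite !idx_catl.
rewrite [in RHS](eq_bigr (fun y => A (l y) (l' y))) => [|y _]; last by rewrite !idx_catr.
ring.
Qed.

Lemma twist_twist n (theta : tensor K d n) (A B : 'I_n -> 'M[K]_d) :
  twist (twist theta A) B = twist theta (fun x => B x *m A x).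
Proof.
apply/ffunP => l; rewrite !ffunE.
transitivity (\sum_(l' : idx d n) \sum_(l'' : idx d n)
   theta l' * ((\prod_x A x (l'' x) (l' x)) * \prod_x B x (l x) (l'' x))).
  under eq_bigr do rewrite ffunE big_distrl /=.
  by rewrite exchange_big; apply: eq_bigr => l' _; apply: eq_bigr => l'' _; ring.
apply: eq_bigr => l' _; rewrite -mulr_sumr; congr (_ * _); under [RHS]eq_bigr do rewrite mxE.
rewrite (bigA_distr_bigA (fun x y => B x (l x) y * A x y (l' x))).
by apply: eq_bigr => l'' _; rewrite -big_split; apply: eq_bigr => x _; rewrite mulrC.
Qed.

Lemma eq_twist n (theta : tensor K d n) (A B : 'I_n -> 'M[K]_d) :
  A =1 B -> twist theta A = twist theta B.
Proof.
move=> eq_AB; apply/ffunP => l; rewrite !ffunE; apply: eq_bigr => l' _.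
by congr (_ * _); apply: eq_bigr => x _; rewrite eq_AB.
Qed.

Lemma eq_diag_form N (c c' : 'I_d -> K) : c =1 c' -> diag_form N c = diag_form N c'.
Proof. by move=> eq_c; apply/ffunP => l; rewrite !ffunE; apply: eq_bigr => i _; rewrite eq_c. Qed.

Lemma twist_diag_form_diag N (c : 'I_d -> K) (e : 'I_N -> 'rV[K]_d) :
  twist (diag_form N c) (fun x => diag_mx (e x)) =
  diag_form N (fun i => c i * \prod_x e x 0 i).
Proof.
apply/ffunP => l; rewrite !ffunE (bigD1 l) //= [X in _ + X]big1 ?addr0; last first.
  move=> l' /ffun_neq_exists[x ne_x].
  by rewrite (bigD1 x) //= mxE eq_sym (negbTE ne_x) mulr0n mul0r mulr0.
rewrite ffunE big_distrl /=; apply: eq_bigr => i _.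
have [->|_] := eqVneq l [ffun=> i]; last by rewrite !mulr0 mul0r.
by rewrite !mulr1; congr (_ * _); apply: eq_bigr => x _; rewrite mxE ffunE eqxx mulr1n.
Qed.

End TensorAction.

Lemma dim_tensor_act_limg (K : fieldType) d m (A : 'M[K]_d) (W : {vspace tensor K d m}) :
  A \in unitmx -> \dim (linfun (tensor_act A) @: W) = \dim W.
Proof.
move=> A_unit; apply/eqP; rewrite eqn_leq limg_dim_le /=.
apply: (leq_trans _ (limg_dim_le (linfun (tensor_act (invmx A))) _)).
apply: dimvS; apply/subvP => u uW.
have -> : u = linfun (tensor_act (invmx A)) (linfun (tensor_act A) u).
  by rewrite !lfunE /= tensor_actM mulmxV // tensor_act1.
by do 2 apply: memv_img.
Qed.

Lemma contract_imageE (K : fieldType) d p n (theta : tensor K d n) s W :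
  contract_image theta s W = (linfun (contract_perm (p := p) theta s) @: W)%VS.
Proof. by []. Qed.

Lemma dim_contract_tensor_act (K : fieldType) d p n (A : 'M[K]_d) (theta : tensor K d n)
    (s : 'S_(p + n)) (W : {vspace tensor K d (p + n)}) :
  (\dim (linfun (contract_perm theta s) @: (linfun (tensor_act A) @: W)) <=
   \dim (contract_image (twist theta (fun _ => A)) s W))%N.
Proof.
apply: (leq_trans _ (limg_dim_le (linfun (tensor_act A)) _)); apply: dimvS.
apply/subvP => v /memv_imgP [_ /memv_imgP [u uW ->] ->].
rewrite !lfunE /= /contract_perm perm_tensor_act -tensor_act_contract.
apply/memv_imgP; eexists; last by rewrite lfunE.
by rewrite contract_imageE; apply/memv_imgP; exists u; rewrite ?lfunE.
Qed.

Section DiagonalizedRepresentation.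
Variables (K : fieldType) (gT : finGroupType) (G : {group gT}) (d : nat).
Variables (rho : mx_representation K G d) (P : 'M[K]_d).
Hypothesis P_unit : P \in unitmx.
Hypothesis P_diag : forall g, g \in G -> is_diag_mx (P *m rho g *m invmx P).

Lemma conj_repr_expg g n : g \in G ->
  P *m rho (g ^+ n)%g *m invmx P = (P *m rho g *m invmx P) ^+ n.
Proof.
move=> Gg; elim: n => [|n IH]; first by rewrite expg0 repr_mx1 mulmx1 mulmxV.
rewrite expgSr repr_mxM ?groupX // exprSr -IH -mulmxE.
by rewrite !mulmxA -(mulmxA _ (invmx P)) mulVmx // mulmx1.
Qed.

Lemma conj_repr_diag g : g \in G ->
  exists2 e : 'rV[K]_d, P *m rho g *m invmx P = diag_mx e & forall i, e 0 i ^+ #|G| = 1.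
Proof.
move=> Gg; have /diag_mxP[e eq_e] := P_diag Gg; exists e => // i.
have := congr1 (fun M : 'M[K]_d => M i i) (conj_repr_expg #|G| Gg).
by rewrite expg_cardG // repr_mx1 mulmx1 mulmxV // eq_e diag_mx_expn !mxE !eqxx !mulr1n.
Qed.

(* sum_i f_i^{(x)|G|} for the dual f_i of the eigenbasis given by P; g scales its
   i-th term by chi_i(g)^|G| = 1. *)
Definition eigen_diag_form := twist (diag_form #|G| (fun _ : 'I_d => 1)) (fun _ => invmx P).

Lemma eigen_diag_form_G_invariant : G_invariant rho eigen_diag_form.
Proof.
move=> g Gg; have [e eq_e e_exp] := conj_repr_diag Gg.
rewrite /eigen_diag_form twist_twist (@eq_twist _ _ _ _ _ (fun _ => invmx P *m diag_mx e)).
  rewrite -(twist_twist _ (fun _ => diag_mx e) (fun _ => invmx P)) twist_diag_form_diag.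
  by congr twist; apply: eq_diag_form => i; rewrite prodr_const card_ord e_exp mulr1.
by move=> _; rewrite -eq_e !mulmxA mulVmx // mul1mx.
Qed.

Lemma conj_diag_GLG (e : 'rV[K]_d) : (forall i, e 0 i != 0) ->
  in_GLG rho (invmx P *m diag_mx e *m P).
Proof.
move=> nz_e; split.
  rewrite !unitmx_mul unitmx_inv P_unit andbT /= unitmxE det_diag unitfE.
  exact/prodf_neq0.
move=> g Gg; have [e' eq_e' _] := conj_repr_diag Gg.
have rho_g : rho g = invmx P *m diag_mx e' *m P.
  by rewrite -eq_e' !mulmxA mulVmx // mul1mx -mulmxA mulVmx // mulmx1.
rewrite rho_g !mulmxA -!(mulmxA _ P) !mulmxV // !mulmx1 -!mulmxA.
by rewrite [diag_mx e *m _]mulmxA diag_mxC -!mulmxA.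
Qed.

Lemma twist_eigen_diag_form (e : 'I_#|G| -> 'rV[K]_d) :
  twist eigen_diag_form (fun x => invmx P *m diag_mx (e x) *m P) =
  twist (diag_form #|G| (fun i => \prod_x e x 0 i)) (fun _ => invmx P).
Proof.
rewrite twist_twist (@eq_twist _ _ _ _ _ (fun x => invmx P *m diag_mx (e x))); last first.
  by move=> x; rewrite -!mulmxA mulmxV // mulmx1.
rewrite -(twist_twist _ (fun x => diag_mx (e x)) (fun _ => invmx P)) twist_diag_form_diag.
by congr twist; apply: eq_diag_form => i; rewrite mul1r.
Qed.

End DiagonalizedRepresentation.

Theorem lemma3p5 (K : fieldType) (gT : finGroupType) (G : {group gT})
  (G_abelian : abelian G)
  (K_infinite : forall s : seq K, exists x : K, x \notin s)
  (G_diag : forall (n : nat) (r : mx_representation K G n),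
     exists2 P : 'M[K]_n, P \in unitmx &
       forall g, g \in G -> is_diag_mx (P *m r g *m invmx P))
  (d : nat) (rho : mx_representation K G d) :
  exists n1 : nat, (0 < n1)%N /\
  exists theta0 : tensor K d n1, G_invariant rho theta0 /\
  forall k : nat, exists M1 : nat,
    forall p : nat, (M1 < p + n1)%N ->
    forall W : {vspace tensor K d (p + n1)},
      (forall (s : 'S_(p + n1)) (phi : 'I_n1 -> 'M[K]_d),
          (forall i, in_GLG rho (phi i)) ->
          (\dim (contract_image (twist theta0 phi) s W) <= k)%N) ->
      (\dim W <= k)%N.
Proof.
have [P P_unit P_diag] := G_diag d rho.
exists #|G|; split; first exact: cardG_gt0.
exists (eigen_diag_form G P); split; first exact: eigen_diag_form_G_invariant.
move=> k; exists (k.+1 * k.+1 + #|G|.-1 * d ^ k.+1)%N => p large W dim_bound.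
rewrite leqNgt; apply/negP => dimW.
have Q_unit : invmx P \in unitmx by rewrite unitmx_inv.
rewrite -(dim_tensor_act_limg _ Q_unit) in dimW.
have [s [t nz_t]] := contract_diag_form_dim_gt K_infinite (cardG_gt0 G) large dimW.
apply/negP; rewrite -leqNgt.
pose x0 : 'I_#|G| := Ordinal (cardG_gt0 G).
pose e x : 'rV[K]_d := if x == x0 then \row_i t ^+ i else const_mx 1.
have nz_e x i : e x 0 i != 0 by rewrite /e; case: ifP => _; rewrite mxE ?oner_neq0 ?expf_neq0.
have prod_e i : \prod_x e x 0 i = t ^+ i.
  rewrite (bigD1 x0) //= big1 => [|x /negbTE ne_x]; last by rewrite /e ne_x mxE.
  by rewrite /e eqxx mulr1 mxE.
have := dim_bound s _ (fun x => conj_diag_GLG P_unit P_diag (nz_e x)).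
rewrite twist_eigen_diag_form // (eq_diag_form _ prod_e); apply: leq_trans.
exact: dim_contract_tensor_act.
Qed.
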